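(* Let $\Gamma$ be the middle-third Cantor set. Then: (1) the set of all uniformly perfect metrics in $\mathrm{Met}(\Gamma)$ is a dense $F_\sigma$ subset of $(\mathrm{Met}(\Gamma),\mathcal{D}_\Gamma)$; (2) the set of all non-uniformly perfect metrics in $\mathrm{Met}(\Gamma)$ is a dense $G_\delta$ subset of $(\mathrm{Met}(\Gamma),\mathcal{D}_\Gamma)$.
   Context: For a metrizable space $X$, $\mathrm{Met}(X)$ is the set of all metrics on $X$ generating its topology, with the (possibly $\infty$-valued) metric $\mathcal{D}_X(d,e)=\sup_{x,y\in X}|d(x,y)-e(x,y)|$. For $c\in(0,1)$, a metric space $(X,d)$ is $c$-uniformly perfect if for every $x\in X$ and every $r\in(0,\delta_d(X))$ (where $\delta_d(X)$ is the diameter) there is $y\in X$ with $c r\le d(x,y)\le r$; it is uniformly perfect if it is $c$-uniformly perfect for some $c\in(0,1)$. $F_\sigma$: countable union of closed sets; $G_\delta$: countable intersection of open sets. *)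

From Stdlib Require Import Reals.
Open Scope R_scope.

(* Middle-third Cantor set: Gamma = \bigcap_n C_n, C_0 = [0,1],
   C_{n+1} = C_n/3 \cup (2/3 + C_n/3). *)
Fixpoint cantor_stage (n : nat) (x : R) : Prop :=
  match n with
  | O => 0 <= x <= 1
  | S m => cantor_stage m (3 * x) \/ cantor_stage m (3 * x - 2)
  end.

Definition in_cantor (x : R) : Prop := forall n, cantor_stage n x.

Definition Gamma : Type := {x : R | in_cantor x}.

Definition is_metric (d : Gamma -> Gamma -> R) : Prop :=
  (forall x y, 0 <= d x y) /\
  (forall x y, d x y = 0 <-> x = y) /\
  (forall x y, d x y = d y x) /\
  (forall x y z, d x z <= d x y + d y z).

Definition d_open (d : Gamma -> Gamma -> R) (U : Gamma -> Prop) : Prop :=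
  forall x, U x -> exists eps, 0 < eps /\ forall y, d x y < eps -> U y.

Definition gamma_open (U : Gamma -> Prop) : Prop :=
  forall x, U x -> exists eps, 0 < eps /\
    forall y, Rabs (proj1_sig x - proj1_sig y) < eps -> U y.

Definition Met (d : Gamma -> Gamma -> R) : Prop :=
  is_metric d /\ forall U, d_open d U <-> gamma_open U.

(* D_Gamma(d,e) < eps, where D_Gamma(d,e) = sup_{x,y} |d x y - e x y| in [0,+oo]. *)
Definition D_lt (d e : Gamma -> Gamma -> R) (eps : R) : Prop :=
  exists s, s < eps /\ forall x y, Rabs (d x y - e x y) <= s.

(* Topology on (Met(Gamma), D_Gamma); subsets are predicates contained in Met. *)
Definition Met_open (U : (Gamma -> Gamma -> R) -> Prop) : Prop :=
  (forall d, U d -> Met d) /\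
  forall d, U d -> exists eps, 0 < eps /\ forall e, Met e -> D_lt d e eps -> U e.

Definition Met_closed (F : (Gamma -> Gamma -> R) -> Prop) : Prop :=
  (forall d, F d -> Met d) /\ Met_open (fun d => Met d /\ ~ F d).

Definition Met_dense (A : (Gamma -> Gamma -> R) -> Prop) : Prop :=
  (forall d, A d -> Met d) /\
  forall d eps, Met d -> 0 < eps -> exists e, A e /\ D_lt d e eps.

Definition Met_Fsigma (A : (Gamma -> Gamma -> R) -> Prop) : Prop :=
  exists F : nat -> (Gamma -> Gamma -> R) -> Prop,
    (forall n, Met_closed (F n)) /\ (forall d, A d <-> exists n, F n d).

Definition Met_Gdelta (A : (Gamma -> Gamma -> R) -> Prop) : Prop :=
  exists G : nat -> (Gamma -> Gamma -> R) -> Prop,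
    (forall n, Met_open (G n)) /\ (forall d, A d <-> Met d /\ forall n, G n d).

(* c-uniformly perfect; "r < diam_d(Gamma)" is unfolded as: some distance exceeds r. *)
Definition c_unif_perfect (c : R) (d : Gamma -> Gamma -> R) : Prop :=
  forall x r, 0 < r -> (exists a b, r < d a b) ->
    exists y, c * r <= d x y /\ d x y <= r.

Definition unif_perfect (d : Gamma -> Gamma -> R) : Prop :=
  exists c, 0 < c < 1 /\ c_unif_perfect c d.

From Stdlib Require Import Reals Lra Lia Arith Classical ClassicalEpsilon ProofIrrelevance Rtopology.
Open Scope R_scope.

(* By compactness such a
     metric d is bounded and uniformly continuous, hence uniformly close to
     d (pi K _) (pi K _).
   - Density of uniform perfectness: d (pi K _) (pi K _) + lam |_ - _| is a
     multiple of the Euclidean metric at small scales.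
   - F_sigma: uniform perfectness is a countable union of closed conditions
     of approximate uniform perfectness; the G_delta claim is its complement.
   - Density of non-uniform perfectness: adding |phi _ - phi _| for a
     staircase phi concentrated at 0 leaves gaps in the distances from 0. *)

Lemma stage_unit_interval (n : nat) (x : R) : cantor_stage n x -> 0 <= x <= 1.
Proof.
  revert x; induction n as [|n IH]; simpl; intros x Hx; [exact Hx|].
  destruct Hx as [Hx|Hx]; apply IH in Hx; lra.
Qed.

Lemma cantor_unit_interval (x : R) : in_cantor x -> 0 <= x <= 1.
Proof. intro Hx; exact (stage_unit_interval 0 x (Hx 0%nat)). Qed.

Lemma cantor_split (x : R) : in_cantor x -> x <= 1/3 \/ 2/3 <= x.
Proof. intro Hx; destruct (Hx 1%nat) as [H|H]; simpl in H; [left|right]; lra. Qed.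

Lemma cantor_left (x : R) : in_cantor x -> x <= 1/3 -> in_cantor (3 * x).
Proof.
  intros Hx Hle n; destruct (Hx (S n)) as [H|H]; [exact H|].
  apply stage_unit_interval in H; lra.
Qed.

Lemma cantor_right (x : R) : in_cantor x -> 2/3 <= x -> in_cantor (3 * x - 2).
Proof.
  intros Hx Hge n; destruct (Hx (S n)) as [H|H]; [|exact H].
  apply stage_unit_interval in H; lra.
Qed.

Lemma cantor_shrink_left (z : R) : in_cantor z -> in_cantor (z / 3).
Proof.
  intros Hz [|n]; simpl.
  - pose proof (cantor_unit_interval z Hz); lra.
  - left; replace (3 * (z / 3)) with z by field; apply Hz.
Qed.

Lemma cantor_shrink_right (z : R) : in_cantor z -> in_cantor (2/3 + z / 3).
Proof.
  intros Hz [|n]; simpl.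
  - pose proof (cantor_unit_interval z Hz); lra.
  - right; replace (3 * (2/3 + z / 3) - 2) with z by field; apply Hz.
Qed.

Lemma cantor_zero : in_cantor 0.
Proof.
  intro n; induction n as [|n IH]; simpl; [lra|].
  left; replace (3 * 0) with 0 by ring; exact IH.
Qed.

Lemma cantor_one : in_cantor 1.
Proof.
  intro n; induction n as [|n IH]; simpl; [lra|].
  right; replace (3 * 1 - 2) with 1 by ring; exact IH.
Qed.

Lemma pow3_pos (n : nat) : 0 < (/3)^n.
Proof. apply pow_lt; lra. Qed.

Lemma pow3_le_1 (n : nat) : (/3)^n <= 1.
Proof. rewrite <- (pow1 n); apply pow_incr; lra. Qed.

Lemma pow3_antitone (m n : nat) : (m <= n)%nat -> (/3)^n <= (/3)^m.
Proof.
  intro Hmn; replace n with (m + (n - m))%nat by lia; rewrite pow_add.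
  pose proof (pow3_pos m); pose proof (pow3_le_1 (n - m)); pose proof (pow3_pos (n - m)).
  nra.
Qed.

Lemma pow3_small (eps : R) : 0 < eps -> exists N, forall n, (N <= n)%nat -> (/3)^n < eps.
Proof.
  intro Heps; destruct (pow_lt_1_zero (/3)) with (y := eps) as [N HN];
    [rewrite Rabs_pos_eq; lra | exact Heps |].
  exists N; intros n Hn; specialize (HN n Hn).
  rewrite Rabs_pos_eq in HN; [exact HN | left; apply pow3_pos].
Qed.

Lemma cantor_gap (m : nat) (x : R) : in_cantor x -> (/3)^m < x -> 2 * (/3)^m <= x.
Proof.
  revert x; induction m as [|m IH]; intros x Hx Hlt.
  - simpl in Hlt; pose proof (cantor_unit_interval x Hx); lra.
  - simpl in *; destruct (cantor_split x Hx) as [Hl|Hr].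
    + pose proof (IH (3 * x) (cantor_left x Hx Hl)); lra.
    + pose proof (pow3_le_1 m); lra.
Qed.

Lemma stage_closed (n : nat) (l : R) :
  (forall del, 0 < del -> exists z, cantor_stage n z /\ Rabs (z - l) < del) ->
  cantor_stage n l.
Proof.
  revert l; induction n as [|n IH]; intros l Hl; simpl.
  - split; apply Rnot_lt_le; intro Hout.
    + destruct (Hl (- l)) as [z [Hz Hd]]; [lra|]; apply Rabs_def2 in Hd; simpl in Hz; lra.
    + destruct (Hl (l - 1)) as [z [Hz Hd]]; [lra|]; apply Rabs_def2 in Hd; simpl in Hz; lra.
  - destruct (classic (forall del, 0 < del ->
        exists z, cantor_stage n (3 * z) /\ Rabs (z - l) < del)) as [Hleft|Hleft].
    + left; apply IH; intros del Hdel.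
      destruct (Hleft (del / 3)) as [z [Hz Hzl]]; [lra|].
      exists (3 * z); split; [exact Hz|].
      replace (3 * z - 3 * l) with (3 * (z - l)) by ring.
      rewrite Rabs_mult, Rabs_pos_eq by lra; lra.
    + right; apply not_all_ex_not in Hleft; destruct Hleft as [d0 Hd0].
      apply imply_to_and in Hd0; destruct Hd0 as [Hd0 Hnone].
      apply IH; intros del Hdel.
      destruct (Hl (Rmin d0 (del / 3))) as [z [Hz Hzl]]; [apply Rmin_pos; lra|].
      pose proof (Rmin_l d0 (del / 3)); pose proof (Rmin_r d0 (del / 3)).
      destruct Hz as [Hz|Hz].
      * exfalso; apply Hnone; exists z; split; [exact Hz | lra].
      * exists (3 * z - 2); split; [exact Hz|].
        replace (3 * z - 2 - (3 * l - 2)) with (3 * (z - l)) by ring.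
        rewrite Rabs_mult, Rabs_pos_eq by lra; lra.
Qed.

Lemma cantor_closed (l : R) :
  (forall del, 0 < del -> exists z, in_cantor z /\ Rabs (z - l) < del) -> in_cantor l.
Proof.
  intros Hl n; apply stage_closed; intros del Hdel.
  destruct (Hl del Hdel) as [z [Hz Hzl]]; exists z; split; [apply Hz | exact Hzl].
Qed.

Notation val := (@proj1_sig R (fun x => in_cantor x)).

Lemma gamma_eq (x y : Gamma) : val x = val y -> x = y.
Proof.
  destruct x as [x hx], y as [y hy]; simpl; intro E; subst.
  f_equal; apply proof_irrelevance.
Qed.

Definition g0 : Gamma := exist _ 0 cantor_zero.
Definition g1 : Gamma := exist _ 1 cantor_one.

Lemma val_unit_interval (x : Gamma) : 0 <= val x <= 1.
Proof. apply cantor_unit_interval, proj2_sig. Qed.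

Lemma val_dist_le_1 (x y : Gamma) : Rabs (val x - val y) <= 1.
Proof.
  pose proof (val_unit_interval x); pose proof (val_unit_interval y); apply Rabs_le; lra.
Qed.

Lemma choice_seq {A : Type} (P : nat -> A -> Prop) :
  (forall n, exists x, P n x) -> exists f : nat -> A, forall n, P n (f n).
Proof.
  intro H; destruct (H 0%nat) as [a _].
  exists (fun n => epsilon (inhabits a) (P n)); intro n; apply epsilon_spec, H.
Qed.

Lemma cluster_near (u : nat -> R) (l : R) : ValAdh u l ->
  forall del N, 0 < del -> exists p, (N <= p)%nat /\ Rabs (u p - l) < del.
Proof.
  intros Hl del N Hdel.
  destruct (Hl (disc l (mkposreal del Hdel)) N) as [p [Hp Hv]].
  - exists (mkposreal del Hdel); intros y Hy; exact Hy.
  - exists p; split; [exact Hp | exact Hv].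
Qed.

Lemma gamma_seq_compact (xs : nat -> Gamma) :
  exists L : Gamma, ValAdh (fun n => val (xs n)) (val L).
Proof.
  destruct (Bolzano_Weierstrass (fun n => val (xs n)) (fun c => 0 <= c <= 1)
              (compact_P3 0 1)) as [l Hl].
  { intro n; apply val_unit_interval. }
  assert (Hin : in_cantor l).
  { apply cantor_closed; intros del Hdel.
    destruct (cluster_near _ _ Hl del 0%nat Hdel) as [p [_ Hp]].
    exists (val (xs p)); split; [apply proj2_sig | exact Hp]. }
  exists (exist _ l Hin); exact Hl.
Qed.

(* The approximation pi K: send x to the left endpoint of its level-K Cantor
   interval.  It moves points by at most (1/3)^K and is constant on each
   level-K piece. *)

Fixpoint cantor_round (K : nat) (x : R) : R :=
  match K with
  | O => 0
  | S k => if Rle_dec x (1/3) then cantor_round k (3 * x) / 3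
           else 2/3 + cantor_round k (3 * x - 2) / 3
  end.

Lemma cantor_round_in (K : nat) (x : R) : in_cantor x -> in_cantor (cantor_round K x).
Proof.
  revert x; induction K as [|K IH]; intros x Hx; simpl; [exact cantor_zero|].
  destruct (Rle_dec x (1/3)) as [Hl|Hl].
  - apply cantor_shrink_left, IH, cantor_left; assumption.
  - destruct (cantor_split x Hx); [lra|].
    apply cantor_shrink_right, IH, cantor_right; assumption.
Qed.

Lemma cantor_round_close (K : nat) (x : R) :
  in_cantor x -> Rabs (cantor_round K x - x) <= (/3)^K.
Proof.
  revert x; induction K as [|K IH]; intros x Hx; simpl.
  - pose proof (cantor_unit_interval x Hx); rewrite Rabs_left1 by lra; lra.
  - destruct (Rle_dec x (1/3)) as [Hl|Hl].
    + pose proof (IH _ (cantor_left x Hx Hl)).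
      replace (cantor_round K (3 * x) / 3 - x)
        with (/3 * (cantor_round K (3 * x) - 3 * x)) by field.
      rewrite Rabs_mult, (Rabs_pos_eq (/3)) by lra; lra.
    + destruct (cantor_split x Hx) as [|Hr]; [lra|].
      pose proof (IH _ (cantor_right x Hx Hr)).
      replace (2/3 + cantor_round K (3 * x - 2) / 3 - x)
        with (/3 * (cantor_round K (3 * x - 2) - (3 * x - 2))) by field.
      rewrite Rabs_mult, (Rabs_pos_eq (/3)) by lra; lra.
Qed.

Lemma cantor_round_local (K : nat) (x y : R) : in_cantor x -> in_cantor y ->
  Rabs (x - y) < (/3)^K -> cantor_round K x = cantor_round K y.
Proof.
  revert x y; induction K as [|K IH]; intros x y Hx Hy Hxy; cbn [cantor_round]; [reflexivity|].
  pose proof (pow3_le_1 K); simpl in Hxy.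
  assert (Hscaled : Rabs (3 * (x - y)) < (/3)^K)
    by (rewrite Rabs_mult, (Rabs_pos_eq 3) by lra; lra).
  destruct (cantor_split x Hx) as [hx|hx], (cantor_split y Hy) as [hy|hy];
    try (apply Rabs_def2 in Hxy; lra).
  - destruct (Rle_dec x (1/3)); [|lra]; destruct (Rle_dec y (1/3)); [|lra].
    f_equal; apply IH; try apply cantor_left; try assumption.
    replace (3 * x - 3 * y) with (3 * (x - y)) by ring; exact Hscaled.
  - destruct (Rle_dec x (1/3)); [lra|]; destruct (Rle_dec y (1/3)); [lra|].
    do 2 f_equal; apply IH; try apply cantor_right; try assumption.
    replace (3 * x - 2 - (3 * y - 2)) with (3 * (x - y)) by ring; exact Hscaled.
Qed.

Definition pi (K : nat) (x : Gamma) : Gamma :=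
  exist _ (cantor_round K (val x)) (cantor_round_in K (val x) (proj2_sig x)).

Lemma pi_close (K : nat) (x : Gamma) : Rabs (val (pi K x) - val x) <= (/3)^K.
Proof. apply cantor_round_close, proj2_sig. Qed.

Lemma pi_local (K : nat) (x y : Gamma) : Rabs (val x - val y) < (/3)^K -> pi K x = pi K y.
Proof. intro H; apply gamma_eq; simpl; apply cantor_round_local; auto; apply proj2_sig. Qed.

Lemma cantor_neighbour (k : nat) (x : R) : in_cantor x ->
  exists y, in_cantor y /\ (/3)^(S k) <= Rabs (x - y) <= (/3)^k.
Proof.
  revert x; induction k as [|k IH]; intros x Hx.
  - simpl; pose proof (cantor_unit_interval x Hx); destruct (cantor_split x Hx).
    + exists 1; split; [exact cantor_one|]; rewrite Rabs_left by lra; lra.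
    + exists 0; split; [exact cantor_zero|]; rewrite Rabs_pos_eq by lra; lra.
  - simpl in *; destruct (cantor_split x Hx) as [Hl|Hr].
    + destruct (IH _ (cantor_left x Hx Hl)) as [y [Hy Hd]].
      exists (y / 3); split; [apply cantor_shrink_left; exact Hy|].
      replace (x - y / 3) with (/3 * (3 * x - y)) by field.
      rewrite Rabs_mult, (Rabs_pos_eq (/3)) by lra; lra.
    + destruct (IH _ (cantor_right x Hx Hr)) as [y [Hy Hd]].
      exists (2/3 + y / 3); split; [apply cantor_shrink_right; exact Hy|].
      replace (x - (2/3 + y / 3)) with (/3 * (3 * x - 2 - y)) by field.
      rewrite Rabs_mult, (Rabs_pos_eq (/3)) by lra; lra.
Qed.

Lemma euclid_unif_perfect (s : R) (x : Gamma) : 0 < s <= 1 ->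
  exists y : Gamma, s / 9 <= Rabs (val x - val y) < s.
Proof.
  intro Hs; destruct (pow3_small s) as [N HN]; [lra|].
  assert (Hscale : forall n, (/3)^n < s ->
            exists y, in_cantor y /\ s / 9 <= Rabs (val x - y) < s).
  { induction n as [|n IH]; intro Hn; [simpl in Hn; lra|].
    destruct (Rlt_or_le ((/3)^n) s) as [Hlt|Hge]; [exact (IH Hlt)|].
    destruct (cantor_neighbour (S n) (val x) (proj2_sig x)) as [y [Hy Hd]].
    exists y; split; [exact Hy|]; simpl in *; lra. }
  destruct (Hscale N (HN N (le_n N))) as [y [Hy Hd]].
  exists (exist _ y Hy); exact Hd.
Qed.

Definition is_pseudometric (p : Gamma -> Gamma -> R) : Prop :=
  (forall x y, 0 <= p x y) /\ (forall x, p x x = 0) /\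
  (forall x y, p x y = p y x) /\ (forall x y z, p x z <= p x y + p y z).

Section MetricFacts.
Variable d : Gamma -> Gamma -> R.
Hypothesis d_metric : is_metric d.

Lemma dist_nonneg (x y : Gamma) : 0 <= d x y.
Proof. apply d_metric. Qed.

Lemma dist_self (x : Gamma) : d x x = 0.
Proof. apply d_metric; reflexivity. Qed.

Lemma dist_sym (x y : Gamma) : d x y = d y x.
Proof. apply d_metric. Qed.

Lemma dist_triangle (x y z : Gamma) : d x z <= d x y + d y z.
Proof. apply d_metric. Qed.

Lemma dist_lipschitz (x x' y y' : Gamma) : Rabs (d x y - d x' y') <= d x x' + d y y'.
Proof.
  pose proof (dist_triangle x x' y); pose proof (dist_triangle x' y' y);
  pose proof (dist_triangle x' x y'); pose proof (dist_triangle x y y');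
  rewrite (dist_sym x' x), (dist_sym y' y) in *; apply Rabs_le; lra.
Qed.

Lemma metric_pseudometric : is_pseudometric d.
Proof.
  repeat split; intros; [apply dist_nonneg | apply dist_self | apply dist_sym | apply dist_triangle].
Qed.

End MetricFacts.

Lemma metric_add (p q : Gamma -> Gamma -> R) : is_pseudometric p -> is_metric q ->
  is_metric (fun x y => p x y + q x y).
Proof.
  intros [p_pos [p_self [p_sym p_tri]]] q_metric.
  repeat split.
  - intros x y; pose proof (p_pos x y); pose proof (dist_nonneg q q_metric x y); lra.
  - intro E; pose proof (p_pos x y); pose proof (dist_nonneg q q_metric x y).
    apply q_metric; lra.
  - intros ->; rewrite p_self, (dist_self q q_metric); ring.
  - intros x y; rewrite p_sym, (dist_sym q q_metric); reflexivity.
  - intros x y z; pose proof (p_tri x y z); pose proof (dist_triangle q q_metric x y z); lra.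
Qed.

Lemma pseudometric_pullback (d : Gamma -> Gamma -> R) (f : Gamma -> Gamma) :
  is_pseudometric d -> is_pseudometric (fun x y => d (f x) (f y)).
Proof. intros [Hpos [Hself [Hsym Htri]]]; repeat split; auto. Qed.

Lemma pseudometric_abs (f : Gamma -> R) : is_pseudometric (fun x y => Rabs (f x - f y)).
Proof.
  repeat split; intros.
  - apply Rabs_pos.
  - rewrite Rminus_diag; apply Rabs_R0.
  - apply Rabs_minus_sym.
  - replace (f x - f z) with ((f x - f y) + (f y - f z)) by ring; apply Rabs_triang.
Qed.

Lemma metric_euclid (lam : R) : 0 < lam -> is_metric (fun x y => lam * Rabs (val x - val y)).
Proof.
  intro Hlam; repeat split.
  - intros x y; pose proof (Rabs_pos (val x - val y)); nra.
  - intro E; apply gamma_eq; destruct (Req_dec (val x - val y) 0) as [|Hne]; [lra|].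
    exfalso; apply Rabs_no_R0 in Hne; pose proof (Rabs_pos (val x - val y)); nra.
  - intros ->; rewrite Rminus_diag, Rabs_R0; ring.
  - intros x y; rewrite Rabs_minus_sym; reflexivity.
  - intros x y z; pose proof (Rabs_triang (val x - val y) (val y - val z)).
    replace (val x - val y + (val y - val z)) with (val x - val z) in * by ring; nra.
Qed.

Definition euclid_continuous (e : Gamma -> Gamma -> R) : Prop :=
  forall x eps, 0 < eps -> exists del, 0 < del /\
    forall y, Rabs (val x - val y) < del -> e x y < eps.

Definition euclid_separating (e : Gamma -> Gamma -> R) : Prop :=
  forall x eps, 0 < eps -> exists del, 0 < del /\
    forall y, e x y < del -> Rabs (val x - val y) < eps.

Lemma Met_iff (e : Gamma -> Gamma -> R) :
  Met e <-> is_metric e /\ euclid_continuous e /\ euclid_separating e.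
Proof.
  split.
  - intros [e_metric e_top]; split; [exact e_metric|]; split.
    + intros x eps Heps.
      assert (Hball : d_open e (fun y => e x y < eps)).
      { intros y Hy; exists (eps - e x y); split; [lra|].
        intros z Hz; pose proof (dist_triangle e e_metric x y z); lra. }
      apply e_top in Hball; apply Hball; rewrite (dist_self e e_metric); exact Heps.
    + intros x eps Heps.
      assert (Hball : gamma_open (fun y => Rabs (val x - val y) < eps)).
      { intros y Hy; exists (eps - Rabs (val x - val y)); split; [lra|].
        intros z Hz; pose proof (Rabs_triang (val x - val y) (val y - val z)).
        replace (val x - val y + (val y - val z)) with (val x - val z) in * by ring; lra. }
      apply e_top in Hball; apply Hball; rewrite Rminus_diag, Rabs_R0; exact Heps.
  - intros [e_metric [e_cont e_sep]]; split; [exact e_metric|]; intro U; split.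
    + intros HU x Hx; destruct (HU x Hx) as [eps [Heps Hin]].
      destruct (e_cont x eps Heps) as [del [Hdel Hclose]].
      exists del; split; [exact Hdel|]; intros y Hy; apply Hin, Hclose, Hy.
    + intros HU x Hx; destruct (HU x Hx) as [eps [Heps Hin]].
      destruct (e_sep x eps Heps) as [del [Hdel Hclose]].
      exists del; split; [exact Hdel|]; intros y Hy; apply Hin, Hclose, Hy.
Qed.

Lemma locally_bounded_bounded (f : Gamma -> R) :
  (forall x, exists del, 0 < del /\ forall y, Rabs (val x - val y) < del -> f y <= f x + 1) ->
  exists B, forall x, f x <= B.
Proof.
  intro f_loc; apply NNPP; intro Hunb.
  assert (Hbig : forall n, exists x, INR n < f x).
  { intro n; apply NNPP; intro Hn; apply Hunb; exists (INR n); intro x.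
    apply Rnot_lt_le; intro Hx; apply Hn; exists x; exact Hx. }
  destruct (choice_seq _ Hbig) as [xs Hxs].
  destruct (gamma_seq_compact xs) as [L HL].
  destruct (f_loc L) as [del [Hdel Hnear]].
  destruct (INR_archimed 1 (f L + 1)) as [N HN]; [lra|].
  destruct (cluster_near _ _ HL del N Hdel) as [p [Hp Hclose]].
  rewrite Rabs_minus_sym in Hclose; specialize (Hnear _ Hclose); specialize (Hxs p).
  apply le_INR in Hp; lra.
Qed.

Lemma Met_bounded (d : Gamma -> Gamma -> R) : Met d -> exists B, forall x y, d x y <= B.
Proof.
  intro d_Met; apply Met_iff in d_Met; destruct d_Met as [d_metric [d_cont _]].
  destruct (locally_bounded_bounded (d g0)) as [B HB].
  { intro x; destruct (d_cont x 1) as [del [Hdel Hclose]]; [lra|].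
    exists del; split; [exact Hdel|]; intros y Hy.
    pose proof (Hclose y Hy); pose proof (dist_triangle d d_metric g0 x y); lra. }
  exists (2 * B); intros x y; pose proof (dist_triangle d d_metric x g0 y).
  pose proof (HB x); pose proof (HB y); rewrite (dist_sym d d_metric x g0) in *; lra.
Qed.

Lemma Met_unif_continuous (d : Gamma -> Gamma -> R) : Met d -> forall eta, 0 < eta ->
  exists del, 0 < del /\ forall x y, Rabs (val x - val y) < del -> d x y < eta.
Proof.
  intros d_Met eta Heta; apply NNPP; intro Hnot.
  assert (Hbad : forall n, exists xy : Gamma * Gamma,
             Rabs (val (fst xy) - val (snd xy)) < (/3)^n /\ eta <= d (fst xy) (snd xy)).
  { intro n; apply NNPP; intro Hn; apply Hnot; exists ((/3)^n); split; [apply pow3_pos|].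
    intros x y Hxy; apply Rnot_le_lt; intro Hle; apply Hn; exists (x, y); auto. }
  destruct (choice_seq _ Hbad) as [xys Hxys].
  destruct (gamma_seq_compact (fun n => fst (xys n))) as [L HL].
  apply Met_iff in d_Met; destruct d_Met as [d_metric [d_cont _]].
  destruct (d_cont L (eta / 2)) as [del [Hdel Hclose]]; [lra|].
  destruct (pow3_small (del / 2)) as [N HN]; [lra|].
  destruct (cluster_near _ _ HL (del / 2) N) as [p [Hp Hxp]]; [lra|].
  destruct (Hxys p) as [Hxy Hfar]; specialize (HN p Hp); cbn beta in Hxp.
  set (x := fst (xys p)) in *; set (y := snd (xys p)) in *.
  rewrite Rabs_minus_sym in Hxp.
  assert (Hx : d L x < eta / 2) by (apply Hclose; lra).
  assert (Hy : d L y < eta / 2).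
  { apply Hclose; pose proof (Rabs_triang (val L - val x) (val x - val y)).
    replace (val L - val x + (val x - val y)) with (val L - val y) in * by ring; lra. }
  pose proof (dist_triangle d d_metric x L y); rewrite (dist_sym d d_metric x L) in *; lra.
Qed.

Lemma Met_pi_close (d : Gamma -> Gamma -> R) : Met d -> forall eta, 0 < eta ->
  exists K, forall x, d x (pi K x) < eta.
Proof.
  intros d_Met eta Heta.
  destruct (Met_unif_continuous d d_Met eta Heta) as [del [Hdel Hclose]].
  destruct (pow3_small del Hdel) as [K HK].
  exists K; intro x; apply Hclose; rewrite Rabs_minus_sym.
  pose proof (pi_close K x); specialize (HK K (le_n K)); lra.
Qed.

(* A bounded metric that is uniformly perfect below some scale s0 > 0 is
   uniformly perfect: larger radii r < diam are handled by the scale s0. *)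
Lemma unif_perfect_of_small_scales (e : Gamma -> Gamma -> R) (c M s0 : R) :
  0 < c < 1 -> 0 < s0 -> (forall x y, e x y <= M) ->
  (forall x r, 0 < r <= s0 -> exists y, c * r <= e x y <= r) ->
  unif_perfect e.
Proof.
  intros Hc Hs0 HM Hsmall.
  pose proof (Rabs_pos M) as HM0; pose proof (Rle_abs M) as HMabs.
  assert (Hfrac : 0 < s0 / (Rabs M + s0) <= 1).
  { split; [apply Rdiv_lt_0_compat; lra|].
    apply (Rmult_le_reg_r (Rabs M + s0)); [lra|].
    unfold Rdiv; rewrite Rmult_assoc, Rinv_l; lra. }
  exists (c * (s0 / (Rabs M + s0))); split; [split; nra|].
  intros x r Hr [a [b Hab]]; pose proof (HM a b).
  destruct (Rle_or_lt r s0) as [Hle|Hgt].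
  - destruct (Hsmall x r) as [y Hy]; [lra|]; exists y; split; [|lra].
    assert (c * r * (s0 / (Rabs M + s0)) <= c * r * 1) by (apply Rmult_le_compat_l; nra).
    nra.
  - destruct (Hsmall x s0) as [y Hy]; [lra|]; exists y; split; [|lra].
    assert (Hr_frac : r * (s0 / (Rabs M + s0)) <= s0).
    { unfold Rdiv; rewrite <- Rmult_assoc, (Rmult_comm r), Rmult_assoc.
      assert (r * / (Rabs M + s0) <= 1); [|nra].
      apply (Rmult_le_reg_r (Rabs M + s0)); [lra|].
      rewrite Rmult_assoc, Rinv_l; lra. }
    nra.
Qed.

(* Below scale (1/3)^K the first term vanishes, so eUP is a multiple of the
   Euclidean distance there; for K large it is uniformly close to d. *)
Section UniformlyPerfectPerturbation.
Variable d : Gamma -> Gamma -> R.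
Hypothesis d_Met : Met d.
Variables (lam : R) (K : nat).
Hypothesis lam_pos : 0 < lam.

Definition eUP (x y : Gamma) : R := d (pi K x) (pi K y) + lam * Rabs (val x - val y).

Lemma eUP_local (x y : Gamma) :
  Rabs (val x - val y) < (/3)^K -> eUP x y = lam * Rabs (val x - val y).
Proof.
  intro Hxy; unfold eUP; rewrite (pi_local K x y Hxy), (dist_self d (proj1 d_Met)); ring.
Qed.

Lemma eUP_Met : Met eUP.
Proof.
  apply Met_iff; split; [|split].
  - unfold eUP; apply metric_add; [|apply metric_euclid; exact lam_pos].
    apply pseudometric_pullback, metric_pseudometric, d_Met.
  - intros x eps Heps.
    exists (Rmin ((/3)^K) (eps / lam)); split; [apply Rmin_pos; [apply pow3_pos | apply Rdiv_lt_0_compat; lra]|].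
    intros y Hy; pose proof (Rmin_l ((/3)^K) (eps / lam)); pose proof (Rmin_r ((/3)^K) (eps / lam)).
    rewrite eUP_local by lra.
    apply (Rmult_lt_compat_l lam) in Hy; [|exact lam_pos].
    assert (lam * Rmin ((/3)^K) (eps / lam) <= eps); [|lra].
    replace eps with (lam * (eps / lam)) at 2 by (field; lra); nra.
  - intros x eps Heps; exists (lam * eps); split; [nra|]; intros y Hy.
    unfold eUP in Hy; pose proof (dist_nonneg d (proj1 d_Met) (pi K x) (pi K y)).
    apply (Rmult_lt_reg_l lam); lra.
Qed.

Lemma eUP_close (eta : R) : (forall x, d x (pi K x) <= eta) ->
  forall x y, Rabs (d x y - eUP x y) <= 2 * eta + lam.
Proof.
  intros Heta x y; unfold eUP.
  pose proof (dist_lipschitz d (proj1 d_Met) x (pi K x) y (pi K y)).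
  pose proof (Heta x); pose proof (Heta y).
  assert (Heuclid : 0 <= lam * Rabs (val x - val y) <= lam).
  { pose proof (val_dist_le_1 x y); pose proof (Rabs_pos (val x - val y)); split; nra. }
  replace (d x y - (d (pi K x) (pi K y) + lam * Rabs (val x - val y)))
    with ((d x y - d (pi K x) (pi K y)) + - (lam * Rabs (val x - val y))) by ring.
  eapply Rle_trans; [apply Rabs_triang|].
  rewrite Rabs_Ropp, (Rabs_pos_eq (lam * _)) by lra; lra.
Qed.

(* Bounded, and uniformly perfect below lam (1/3)^K by Euclidean perfectness. *)
Lemma eUP_unif_perfect : unif_perfect eUP.
Proof.
  destruct (Met_bounded d d_Met) as [B HB].
  pose proof (pow3_pos K) as HK; pose proof (pow3_le_1 K).
  apply (unif_perfect_of_small_scales eUP (/9) (B + lam) (lam * (/3)^K)).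
  - lra.
  - nra.
  - intros x y; unfold eUP; pose proof (HB (pi K x) (pi K y)); pose proof (val_dist_le_1 x y); nra.
  - intros x r Hr.
    assert (Hs : 0 < r / lam <= (/3)^K).
    { split; [apply Rdiv_lt_0_compat; lra|].
      apply (Rmult_le_reg_l lam); [exact lam_pos|].
      replace (lam * (r / lam)) with r by (field; lra); lra. }
    destruct (euclid_unif_perfect (r / lam) x) as [y Hy]; [lra|].
    exists y; rewrite eUP_local by lra.
    assert (Hlo : lam * (r / lam / 9) <= lam * Rabs (val x - val y))
      by (apply Rmult_le_compat_l; lra).
    assert (Hhi : lam * Rabs (val x - val y) <= lam * (r / lam))
      by (apply Rmult_le_compat_l; lra).
    replace (lam * (r / lam / 9)) with (/9 * r) in Hlo by (field; lra).
    replace (lam * (r / lam)) with r in Hhi by (field; lra); lra.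
Qed.

End UniformlyPerfectPerturbation.

Lemma UP_dense : Met_dense (fun d => Met d /\ unif_perfect d).
Proof.
  split; [intros d [Hd _]; exact Hd|]; intros d eps d_Met Heps.
  destruct (Met_pi_close d d_Met (eps / 4)) as [K HK]; [lra|].
  exists (eUP d (eps / 4) K); split; [split|].
  - apply eUP_Met; [exact d_Met | lra].
  - apply eUP_unif_perfect; [exact d_Met | lra].
  - exists (3 * eps / 4); split; [lra|]; intros x y.
    replace (3 * eps / 4) with (2 * (eps / 4) + eps / 4) by field.
    apply eUP_close; [exact d_Met | lra | intro x'; left; apply HK].
Qed.

(* The F_sigma structure.  "approx_perfect c d" is c-uniform perfectness up
   to an arbitrary additive slack; unlike c_unif_perfect it is preserved by
   uniform limits, so each class F_n = {d | approx_perfect (1/(n+2)) d} is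
   closed, and the uniformly perfect metrics are exactly their union. *)

Definition approx_perfect (c : R) (d : Gamma -> Gamma -> R) : Prop :=
  forall del x r, 0 < del -> 0 < r -> (exists a b, r < d a b) ->
    exists y, c * r - del <= d x y <= r + del.

Lemma unif_perfect_approx (c : R) (d : Gamma -> Gamma -> R) :
  c_unif_perfect c d -> approx_perfect c d.
Proof.
  intros Hd del x r Hdel Hr Hdiam; destruct (Hd x r Hr Hdiam) as [y Hy]; exists y; lra.
Qed.

Lemma approx_perfect_antitone (c c' : R) (d : Gamma -> Gamma -> R) :
  c' <= c -> approx_perfect c d -> approx_perfect c' d.
Proof.
  intros Hc Hd del x r Hdel Hr Hdiam; destruct (Hd del x r Hdel Hr Hdiam) as [y Hy].
  exists y; split; [|lra].
  assert (c' * r <= c * r) by (apply Rmult_le_compat_r; lra); lra.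
Qed.

(* Taking slack c r / 4 at radius r - c r / 4 recovers (c/2)-uniform perfectness. *)
Lemma approx_unif_perfect (c : R) (d : Gamma -> Gamma -> R) :
  0 < c < 1 -> approx_perfect c d -> c_unif_perfect (c / 2) d.
Proof.
  intros Hc Hd x r Hr [a [b Hab]].
  assert (Hcr : 0 < c * r) by nra.
  destruct (Hd (c * r / 4) x (r - c * r / 4)) as [y Hy]; [lra | nra | exists a, b; lra |].
  exists y; split; [|lra].
  assert (c * (c * r) <= c * r) by (rewrite <- (Rmult_1_l (c * r)) at 2; apply Rmult_le_compat_r; lra).
  nra.
Qed.

Lemma not_approx_perfect (c : R) (d : Gamma -> Gamma -> R) : ~ approx_perfect c d ->
  exists del x r a b, 0 < del /\ 0 < r /\ r < d a b /\
    forall y, ~ (c * r - del <= d x y <= r + del).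
Proof.
  intro Hnot; apply NNPP; intro Hnone; apply Hnot; intros del x r Hdel Hr [a [b Hab]].
  apply NNPP; intro Hy; apply Hnone; exists del, x, r, a, b; repeat split; auto.
  intros y Hy'; apply Hy; exists y; exact Hy'.
Qed.

Lemma abs_le_bounds (a s : R) : Rabs a <= s -> - s <= a <= s.
Proof. intro H; pose proof (Rle_abs a); pose proof (Rle_abs (- a)); rewrite Rabs_Ropp in *; lra. Qed.

Definition perfect_class (n : nat) (d : Gamma -> Gamma -> R) : Prop :=
  Met d /\ approx_perfect (/ INR (S (S n))) d.

(* If d is not in F_n, a witness survives every perturbation of d that is
   smaller than its slack and than the excess of the diameter witness. *)
Lemma perfect_class_closed (n : nat) : Met_closed (perfect_class n).
Proof.
  split; [intros d [Hd _]; exact Hd|]; split; [intros d [Hd _]; exact Hd|].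
  intros d [d_Met Hout].
  assert (Hnot : ~ approx_perfect (/ INR (S (S n))) d) by (intro H; apply Hout; split; auto).
  destruct (not_approx_perfect _ _ Hnot) as [del [x [r [a [b [Hdel [Hr [Hab Hfar]]]]]]]].
  exists (Rmin (del / 2) (d a b - r)); split; [apply Rmin_pos; lra|].
  intros e e_Met [s [Hs Hde]]; split; [exact e_Met|]; intros [_ He].
  pose proof (Rmin_l (del / 2) (d a b - r)); pose proof (Rmin_r (del / 2) (d a b - r)).
  destruct (He (del / 2) x r) as [y Hy]; [lra | exact Hr | exists a, b | ].
  - pose proof (abs_le_bounds _ _ (Hde a b)); lra.
  - apply (Hfar y); pose proof (abs_le_bounds _ _ (Hde x y)); lra.
Qed.

Lemma unif_perfect_classes (d : Gamma -> Gamma -> R) :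
  Met d /\ unif_perfect d <-> exists n, perfect_class n d.
Proof.
  split.
  - intros [d_Met [c [Hc Hd]]].
    destruct (archimed_cor1 c) as [N [HN HN0]]; [lra|].
    exists N; split; [exact d_Met|].
    apply (approx_perfect_antitone c); [|apply unif_perfect_approx; exact Hd].
    left; eapply Rle_lt_trans; [|exact HN].
    apply Rinv_le_contravar; [apply lt_0_INR; exact HN0 | apply le_INR; lia].
  - intros [n [d_Met Hd]]; split; [exact d_Met|].
    assert (Hc : 0 < / INR (S (S n)) < 1).
    { rewrite !S_INR; pose proof (pos_INR n); split; [apply Rinv_0_lt_compat; lra|].
      rewrite <- Rinv_1; apply Rinv_lt_contravar; lra. }
    exists (/ INR (S (S n)) / 2); split; [lra|]; apply approx_unif_perfect; assumption.
Qed.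

Lemma UP_Fsigma : Met_Fsigma (fun d => Met d /\ unif_perfect d).
Proof. exists perfect_class; split; [exact perfect_class_closed | exact unif_perfect_classes]. Qed.

Lemma NUP_Gdelta : Met_Gdelta (fun d => Met d /\ ~ unif_perfect d).
Proof.
  exists (fun n d => Met d /\ ~ perfect_class n d); split.
  - intro n; exact (proj2 (perfect_class_closed n)).
  - intro d; split.
    + intros [d_Met Hnot]; split; [exact d_Met|]; intro n; split; [exact d_Met|].
      intro Hn; apply Hnot, (unif_perfect_classes d); exists n; exact Hn.
    + intros [d_Met Hout]; split; [exact d_Met|]; intro Hup.
      destruct (proj1 (unif_perfect_classes d) (conj d_Met Hup)) as [n Hn].
      exact (proj2 (Hout n) Hn).
Qed.

(* Density of non-uniformly perfect metrics: add to d a staircase at 0,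
     eN x y = |phi x - phi y| + d x y,
   where phi = t_j := a / j! on the level ((1/3)^m(j+1), (1/3)^m(j)] and
   phi 0 = 0.  The levels shrink fast enough that d(0, y) < t_(j+1) below
   level j.  As t_(N+1) / t_N -> 0, the eN-distances from 0 avoid the window
   [2 t_(N+1), t_N], which rules out uniform perfectness. *)

Definition stair (a : R) (j : nat) : R := a / INR (fact j).

Lemma stair_pos (a : R) (j : nat) : 0 < a -> 0 < stair a j.
Proof. intro Ha; apply Rdiv_lt_0_compat; [exact Ha | apply INR_fact_lt_0]. Qed.

Lemma stair_antitone (a : R) (i j : nat) : 0 < a -> (i <= j)%nat -> stair a j <= stair a i.
Proof.
  intros Ha Hij; unfold stair, Rdiv; apply Rmult_le_compat_l; [lra|].
  apply Rinv_le_contravar; [apply INR_fact_lt_0 | apply le_INR, fact_le, Hij].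
Qed.

Lemma stair_le (a : R) (j : nat) : 0 < a -> stair a j <= a.
Proof.
  intro Ha; pose proof (stair_antitone a 0 j Ha (Nat.le_0_l j)).
  unfold stair in *; simpl in *; lra.
Qed.

Lemma stair_succ (a : R) (j : nat) : stair a (S j) = stair a j / INR (S j).
Proof.
  unfold stair; rewrite fact_simpl, mult_INR.
  pose proof (INR_fact_lt_0 j); pose proof (lt_0_INR (S j) (Nat.lt_0_succ j)); field; lra.
Qed.

Lemma stair_small (a eta : R) : 0 < a -> 0 < eta -> exists J, stair a J < eta.
Proof.
  intros Ha Heta; destruct (archimed_cor1 (eta / a)) as [N [HN HN0]];
    [apply Rdiv_lt_0_compat; lra|].
  exists N; assert (HNpos : 0 < INR N) by (apply lt_0_INR; exact HN0).
  assert (Hfact : INR N <= INR (fact N)).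
  { apply le_INR; induction N as [|n IH]; simpl; [lia|]; pose proof (lt_O_fact n); nia. }
  assert (stair a N <= a / INR N).
  { unfold stair, Rdiv; apply Rmult_le_compat_l; [lra|]; apply Rinv_le_contravar; lra. }
  apply (Rmult_lt_compat_l a) in HN; [|exact Ha].
  replace (a * (eta / a)) with eta in HN by (field; lra); unfold Rdiv in *; lra.
Qed.

Section NonUniformlyPerfectPerturbation.
Variable d : Gamma -> Gamma -> R.
Hypothesis d_Met : Met d.
Variable a : R.
Hypothesis a_pos : 0 < a.
Variable m : nat -> nat.
Hypothesis m_zero : m 0%nat = 0%nat.
Hypothesis m_increasing : forall j, (m j < m (S j))%nat.
Hypothesis m_modulus : forall j (y : Gamma), val y <= (/3)^(m (S j)) -> d g0 y < stair a (S j).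

Lemma level_bound_antitone (i j : nat) : (i <= j)%nat -> (/3)^(m j) <= (/3)^(m i).
Proof.
  intro Hij; apply pow3_antitone; induction Hij as [|j Hij IH]; [lia|].
  pose proof (m_increasing j); lia.
Qed.

Definition level (j : nat) (y : R) : Prop := (/3)^(m (S j)) < y <= (/3)^(m j).

Lemma level_below (j k : nat) (y : R) : level j y -> y <= (/3)^(m k) -> (k <= j)%nat.
Proof.
  intros [Hlo _] Hy; destruct (le_lt_dec k j) as [|Hjk]; [assumption|].
  pose proof (level_bound_antitone (S j) k Hjk); lra.
Qed.

Lemma level_above (j k : nat) (y : R) : level j y -> (/3)^(m k) < y -> (j < k)%nat.
Proof.
  intros [_ Hhi] Hy; destruct (le_lt_dec k j) as [Hkj|]; [|assumption].
  pose proof (level_bound_antitone k j Hkj); lra.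
Qed.

Lemma level_unique (i j : nat) (y : R) : level i y -> level j y -> i = j.
Proof.
  intros Hi Hj; pose proof (level_below j i y Hj (proj2 Hi));
    pose proof (level_below i j y Hi (proj2 Hj)); lia.
Qed.

Lemma level_exists (y : R) : 0 < y <= 1 -> exists j, level j y.
Proof.
  intro Hy; destruct (pow3_small y) as [N HN]; [lra|].
  assert (Hm_ge : forall j, (j <= m j)%nat).
  { induction j as [|j IH]; [lia|]; pose proof (m_increasing j); lia. }
  assert (Hfind : forall n, (/3)^(m n) < y -> exists j, level j y).
  { induction n as [|n IH]; intro Hn; [rewrite m_zero in Hn; simpl in Hn; lra|].
    destruct (Rlt_or_le ((/3)^(m n)) y) as [Hlt|Hge]; [exact (IH Hlt)|].
    exists n; split; assumption. }
  apply (Hfind N), HN, Hm_ge.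
Qed.

Definition phi (y : R) : R :=
  if Rle_dec y 0 then 0 else stair a (epsilon (inhabits 0%nat) (fun j => level j y)).

Lemma phi_level (j : nat) (y : R) : level j y -> phi y = stair a j.
Proof.
  intro Hj; unfold phi; destruct (Rle_dec y 0) as [Hy|Hy].
  - destruct Hj as [Hlo _]; pose proof (pow3_pos (m (S j))); lra.
  - f_equal; apply (level_unique _ _ y); [apply epsilon_spec; exists j|]; exact Hj.
Qed.

Lemma phi_zero : phi 0 = 0.
Proof. unfold phi; destruct (Rle_dec 0 0); [reflexivity | lra]. Qed.

Lemma phi_cases (y : Gamma) :
  (val y = 0 /\ phi (val y) = 0) \/ (exists j, level j (val y) /\ phi (val y) = stair a j).
Proof.
  pose proof (val_unit_interval y); destruct (Req_dec (val y) 0) as [Hy|Hy].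
  - left; rewrite Hy; split; [reflexivity | exact phi_zero].
  - right; destruct (level_exists (val y)) as [j Hj]; [lra|].
    exists j; split; [exact Hj | apply phi_level, Hj].
Qed.

Lemma phi_small (N : nat) (y : Gamma) : val y <= (/3)^(m N) -> phi (val y) <= stair a N.
Proof.
  intro Hy; destruct (phi_cases y) as [[_ ->]|[j [Hj ->]]].
  - left; apply stair_pos, a_pos.
  - apply stair_antitone; [exact a_pos | exact (level_below j N _ Hj Hy)].
Qed.

Lemma phi_large (N : nat) (y : Gamma) : (/3)^(m (S N)) < val y -> stair a N <= phi (val y).
Proof.
  intro Hy; destruct (phi_cases y) as [[Hy0 _]|[j [Hj ->]]].
  - pose proof (pow3_pos (m (S N))); lra.
  - apply stair_antitone; [exact a_pos|]; pose proof (level_above j (S N) _ Hj Hy); lia.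
Qed.

Lemma phi_range (y : Gamma) : 0 <= phi (val y) <= a.
Proof.
  destruct (phi_cases y) as [[_ ->]|[j [_ ->]]]; [lra|].
  pose proof (stair_pos a j a_pos); pose proof (stair_le a j a_pos); lra.
Qed.

(* phi is continuous on Gamma: at 0 because t_j -> 0, elsewhere it is locally
   constant thanks to the gaps of the Cantor set. *)
Lemma phi_continuous (x : Gamma) (eta : R) : 0 < eta -> exists del, 0 < del /\
  forall z : Gamma, Rabs (val x - val z) < del -> Rabs (phi (val x) - phi (val z)) < eta.
Proof.
  intro Heta; destruct (phi_cases x) as [[Hx0 Hphix]|[j [Hj Hphix]]].
  - destruct (stair_small a eta a_pos Heta) as [J HJ].
    exists ((/3)^(m J)); split; [apply pow3_pos|]; intros z Hz.
    rewrite Hx0, Rminus_0_l, Rabs_Ropp, Rabs_pos_eq in Hz by apply val_unit_interval.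
    pose proof (phi_small J z (Rlt_le _ _ Hz)); pose proof (phi_range z).
    rewrite Hphix, Rminus_0_l, Rabs_Ropp, Rabs_pos_eq by lra; lra.
  - exists ((/3)^(m (S j))); split; [apply pow3_pos|]; intros z Hz.
    destruct Hj as [Hlo Hhi]; apply Rabs_def2 in Hz.
    pose proof (cantor_gap _ _ (proj2_sig x) Hlo).
    assert (Hzj : level j (val z)).
    { split; [lra|]; apply Rnot_lt_le; intro Hz_hi.
      pose proof (cantor_gap _ _ (proj2_sig z) Hz_hi).
      pose proof (level_bound_antitone j (S j) (Nat.le_succ_diag_r j)); lra. }
    rewrite Hphix, (phi_level j _ Hzj), Rminus_diag, Rabs_R0; exact Heta.
Qed.

Definition eN (x y : Gamma) : R := Rabs (phi (val x) - phi (val y)) + d x y.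

(* phi is continuous and eN dominates d, so eN generates the same topology. *)
Lemma eN_Met : Met eN.
Proof.
  pose proof d_Met as d_Met'; apply Met_iff in d_Met'.
  destruct d_Met' as [d_metric [d_cont d_sep]].
  apply Met_iff; split; [|split].
  - apply metric_add; [apply (pseudometric_abs (fun x => phi (val x))) | exact d_metric].
  - intros x eps Heps.
    destruct (d_cont x (eps / 2)) as [del1 [Hdel1 H1]]; [lra|].
    destruct (phi_continuous x (eps / 2)) as [del2 [Hdel2 H2]]; [lra|].
    exists (Rmin del1 del2); split; [apply Rmin_pos; assumption|]; intros y Hy.
    pose proof (Rmin_l del1 del2); pose proof (Rmin_r del1 del2).
    pose proof (H1 y ltac:(lra)); pose proof (H2 y ltac:(lra)); unfold eN; lra.
  - intros x eps Heps; destruct (d_sep x eps Heps) as [del [Hdel Hsep]].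
    exists del; split; [exact Hdel|]; intros y Hy; apply Hsep.
    unfold eN in Hy; pose proof (Rabs_pos (phi (val x) - phi (val y))); lra.
Qed.

Lemma eN_close (x y : Gamma) : Rabs (d x y - eN x y) <= a.
Proof.
  unfold eN; replace (d x y - (Rabs (phi (val x) - phi (val y)) + d x y))
    with (- Rabs (phi (val x) - phi (val y))) by ring.
  rewrite Rabs_Ropp, Rabs_Rabsolu; pose proof (phi_range x); pose proof (phi_range y).
  apply Rabs_le; lra.
Qed.

(* Radius t_N / 2 at the point 0: a point y with c r <= eN(0, y) <= r is
   neither below level N (there eN(0, y) < 2 t_(N+1) < c r) nor above it. *)
Lemma eN_not_unif_perfect : ~ unif_perfect eN.
Proof.
  intros [c [Hc Hup]].
  destruct (archimed_cor1 (c / 4)) as [N [HN HN0]]; [lra|].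
  pose proof (stair_pos a N a_pos); pose proof (stair_pos a (S N) a_pos).
  assert (Hratio : stair a (S N) < c / 4 * stair a N).
  { rewrite stair_succ; unfold Rdiv at 1; rewrite Rmult_comm.
    apply Rmult_lt_compat_r; [exact (stair_pos a N a_pos)|].
    eapply Rle_lt_trans; [|exact HN].
    apply Rinv_le_contravar; [apply lt_0_INR; exact HN0 | apply le_INR; lia]. }
  assert (Hphi0 : phi (val g0) = 0) by exact phi_zero.
  pose proof (dist_nonneg d (proj1 d_Met)) as d_pos.
  destruct (Hup g0 (stair a N / 2)) as [y [Hy_lo Hy_hi]]; [lra| |].
  - exists g0, g1; unfold eN; rewrite Hphi0, Rminus_0_l, Rabs_Ropp.
    assert (Hg1 : (/3)^(m (S N)) < val g1).
    { pose proof (m_increasing N); pose proof (pow3_antitone 1 (m (S N)) ltac:(lia)).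
      simpl in *; lra. }
    pose proof (phi_large N g1 Hg1); pose proof (d_pos g0 g1).
    rewrite Rabs_pos_eq by lra; lra.
  - unfold eN in Hy_lo, Hy_hi; rewrite Hphi0, Rminus_0_l, Rabs_Ropp in *.
    pose proof (phi_range y); rewrite Rabs_pos_eq in * by lra.
    destruct (Rle_or_lt (val y) ((/3)^(m (S N)))) as [Hsmall|Hlarge].
    + pose proof (phi_small (S N) y Hsmall); pose proof (m_modulus N y Hsmall); nra.
    + pose proof (phi_large N y Hlarge); pose proof (d_pos g0 y); lra.
Qed.

End NonUniformlyPerfectPerturbation.

(* The scales at which d(0, _) drops below the stair heights exist by
   continuity of d at 0; chosen increasingly they form the levels above. *)
Lemma staircase_levels (d : Gamma -> Gamma -> R) (a : R) : Met d -> 0 < a ->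
  exists m : nat -> nat, m 0%nat = 0%nat /\ (forall j, (m j < m (S j))%nat) /\
    forall j (y : Gamma), val y <= (/3)^(m (S j)) -> d g0 y < stair a (S j).
Proof.
  intros d_Met Ha.
  assert (Hmu : forall j, exists k, forall y : Gamma, val y <= (/3)^k -> d g0 y < stair a j).
  { intro j; apply Met_iff in d_Met; destruct d_Met as [_ [d_cont _]].
    destruct (d_cont g0 (stair a j) (stair_pos a j Ha)) as [del [Hdel Hclose]].
    destruct (pow3_small del Hdel) as [k Hk]; exists k; intros y Hy; apply Hclose.
    pose proof (val_unit_interval y); specialize (Hk k (le_n k)).
    simpl; rewrite Rminus_0_l, Rabs_Ropp, Rabs_pos_eq; lra. }
  destruct (choice_seq _ Hmu) as [mu Hmu_spec].
  exists (fix m j := match j with O => O | S k => S (m k + mu (S k)) end).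
  split; [reflexivity|]; split; [intro j; simpl; lia|].
  intros j y Hy; apply Hmu_spec; eapply Rle_trans; [exact Hy|].
  apply pow3_antitone; simpl; lia.
Qed.

Lemma NUP_dense : Met_dense (fun d => Met d /\ ~ unif_perfect d).
Proof.
  split; [intros d [Hd _]; exact Hd|]; intros d eps d_Met Heps.
  destruct (staircase_levels d (eps / 2) d_Met) as [m [m_zero [m_incr m_mod]]]; [lra|].
  assert (Ha : 0 < eps / 2) by lra.
  exists (eN d (eps / 2) m); split; [split|].
  - apply eN_Met; assumption.
  - apply eN_not_unif_perfect; assumption.
  - exists (eps / 2); split; [lra|]; intros x y; apply eN_close; assumption.
Qed.

Theorem theorem1p5 :
  (Met_dense (fun d => Met d /\ unif_perfect d) /\
   Met_Fsigma (fun d => Met d /\ unif_perfect d)) /\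
  (Met_dense (fun d => Met d /\ ~ unif_perfect d) /\
   Met_Gdelta (fun d => Met d /\ ~ unif_perfect d)).
Proof.
  split; split.
  - exact UP_dense.
  - exact UP_Fsigma.
  - exact NUP_dense.
  - exact NUP_Gdelta.
Qed.
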